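(* Let $X$ be a $\mathbb{Z}^n$-periodic discrete metric space with $N$ orbits and let $A\in\mathcal{W}(X)$ be $\mathbb{Z}^n$-periodic ($T_\alpha A=AT_\alpha$ for all $\alpha$). Then $UAU^{-1}$ is a shift-invariant operator in $W(\mathbb{Z}^n,\mathbb{C}^N)$: $UAU^{-1}=\sum_{\beta\in\mathbb{Z}^n}r_A(\beta)V_\beta$, where $r_A(\beta)=(r_A^{ij}(\beta,0))_{i,j=1}^N$ are constant matrices with $|r_A^{ij}(\beta,0)|\le h(\beta)$ for some nonnegative $h\in l^1(\mathbb{Z}^n)$; in particular $A$ is isometrically equivalent (via the isometry $U$) to this shift-invariant matrix operator.
   Context: A discrete metric space is a countable set $X$ with a metric $\rho$ such that every ball is finite. It is $\mathbb{Z}^n$-periodic if $\mathbb{Z}^n$ acts on $X$ by $\rho$-isometries, $(\alpha,x)\mapsto\alpha\cdot x$ (a group action), freely, with finitely many orbits; $x_1,\dots,x_N$ are fixed orbit representatives. $U$: $(Uf)(\alpha)=(f(\alpha\cdot x_1),\dots,f(\alpha\cdot x_N))$, an isometry $l^p(X)\to l^p(\mathbb{Z}^n,\mathbb{C}^N)$. $(T_\alpha u)(x)=u((-\alpha)\cdot x)$, $(V_\beta u)(x)=u(x-\beta)$. For a linear operator $A$ with generating function $k_A$ (i.e. $(Au)(x)=\sum_y k_A(x,y)u(y)$ for finitely supported $u$), $r_A^{ij}(\alpha,\beta)=k_A(\alpha\cdot x_i,\beta\cdot x_j)$. $\mathcal{W}(X)$: such operators with $\max_j\sum_i|r_A^{ij}(\alpha,\beta)|\le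 h_A(\alpha-\beta)$ for some $h_A\in l^1(\mathbb{Z}^n)$. $W(\mathbb{Z}^n,\mathbb{C}^N)$: operators $\sum_\alpha a_\alpha V_\alpha$, $a_\alpha\in l^\infty(\mathbb{Z}^n,\mathbb{C}^{N\times N})$, with $\sum_\alpha\|a_\alpha\|_{l^\infty}<\infty$. *)

From HB Require Import structures.
From mathcomp Require Import all_boot all_order all_algebra.
From mathcomp Require Import boolp classical_sets cardinality fsbigop reals ereal esum.
From mathcomp Require Import complex.
Set Implicit Arguments. Unset Strict Implicit. Unset Printing Implicit Defensive.
Import Order.TTheory GRing.Theory Num.Theory.
Local Open Scope ring_scope.
Local Open Scope classical_set_scope.

Notation Zn n := ('rV[int]_n).

Section Defs.
Variable R : realType.
Local Notation C := (R[i]).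

Definition is_metric (X : choiceType) (rho : X -> X -> R) : Prop :=
  [/\ forall x y, 0 <= rho x y,
      forall x y, rho x y = 0 <-> x = y,
      forall x y, rho x y = rho y x &
      forall x y z, rho x z <= rho x y + rho y z].

Definition discrete_metric_space (X : countType) (rho : X -> X -> R) : Prop :=
  is_metric rho /\ forall x r, finite_set [set y | rho x y <= r].

Definition periodic_dms (n N : nat) (X : countType) (rho : X -> X -> R)
    (act : Zn n -> X -> X) (xs : 'I_N -> X) : Prop :=
  [/\ discrete_metric_space rho,
      ((forall x, act 0 x = x) /\ (forall a b x, act (a + b) x = act a (act b x))),
      (forall a x y, rho (act a x) (act a y) = rho x y),
      (forall a x, act a x = x -> a = 0) &
      (forall x, exists i a, x = act a (xs i)) /\
      (forall i j a, act a (xs i) = xs j -> i = j)].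

Definition fin_supp (X : choiceType) (u : X -> C) : Prop := finite_set [set x | u x != 0].
Definition fin_supp_vec (n N : nat) (v : Zn n -> 'I_N -> C) : Prop :=
  finite_set [set a | exists j, v a j != 0].

Definition kop (X : choiceType) (k : X -> X -> C) (u : X -> C) : X -> C :=
  fun x => \sum_(y \in [set y | u y != 0]) k x y * u y.

Definition Tshift (n : nat) (X : choiceType) (act : Zn n -> X -> X) (a : Zn n)
    (u : X -> C) : X -> C := fun x => u (act (- a) x).

Definition Vshift (n N : nat) (b : Zn n) (v : Zn n -> 'I_N -> C) : Zn n -> 'I_N -> C :=
  fun a => v (a - b).

Definition Uop (n N : nat) (X : choiceType) (act : Zn n -> X -> X) (xs : 'I_N -> X)
    (f : X -> C) : Zn n -> 'I_N -> C := fun a i => f (act a (xs i)).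

(* U^{-1}: (U^{-1} v)(a.x_i) = v a i  (well defined for a periodic space) *)
Definition Uinv (n N : nat) (X : choiceType) (act : Zn n -> X -> X) (xs : 'I_N -> X)
    (v : Zn n -> 'I_N -> C) : X -> C :=
  fun x => \sum_(i < N)
    match pselect (exists a, act a (xs i) = x) with
    | left H => v (projT1 (cid H)) i
    | right _ => 0
    end.

Definition rker (n N : nat) (X : choiceType) (act : Zn n -> X -> X) (xs : 'I_N -> X)
    (k : X -> X -> C) (a b : Zn n) (i j : 'I_N) : C := k (act a (xs i)) (act b (xs j)).

Definition in_WX (n N : nat) (X : choiceType) (act : Zn n -> X -> X) (xs : 'I_N -> X)
    (k : X -> X -> C) : Prop :=
  exists h : Zn n -> R, summable setT (fun a => (h a)%:E) /\
    forall a b j, \sum_(i < N) `|rker act xs k a b i j| <= ((h (a - b))%:C)%C.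

(* The shift-invariant matrix operator  sum_b r(b) V_b  applied to a finitely
   supported v (the sum is restricted to the finitely many nonzero terms). *)
Definition shift_inv_op (n N : nat) (r : Zn n -> 'M[C]_N)
    (v : Zn n -> 'I_N -> C) : Zn n -> 'I_N -> C :=
  fun a i => \sum_(b \in [set b | exists j, Vshift b v a j != 0])
               \sum_(j < N) r b i j * Vshift b v a j.

End Defs.

From HB Require Import structures.
From mathcomp Require Import all_boot all_order all_algebra.
From mathcomp Require Import boolp classical_sets cardinality fsbigop reals ereal esum.
From mathcomp Require Import complex.
Import Order.TTheory GRing.Theory Num.Theory.
Local Open Scope ring_scope.
Local Open Scope classical_set_scope.
Set Implicit Arguments. Unset Strict Implicit. Unset Printing Implicit Defensive.

(* Testing the commutation [T_a A = A T_a] on a point mass at [y] gives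
   [k((-a).x, y) = k(x, a.y)], so [r_A^{ij}(a, b)] depends only on [a - b].
   Freeness and the choice of orbit representatives make [(a, i) |-> a.x_i] a
   bijection [Z^n * 'I_N -> X]; in these coordinates [A] acts as the
   convolution by the matrices [r_A(b, 0)], whose entries the [W(X)] bound at
   [(b, 0)] dominates by [|h b|]. *)

Lemma fsbig_setT_fin (R : Type) (idx : R) (op : Monoid.com_law idx)
    (T : finType) (F : T -> R) :
  \big[op/idx]_(i \in [set: T]) F i = \big[op/idx]_(i : T) F i.
Proof.
rewrite [RHS](bigfs _ _ (P := predT)) ?index_enum_uniq //; last first.
  by move=> i _; rewrite mem_index_enum.
by congr (\big[_/_]_(i \in _) _); apply/seteqP; split.
Qed.

Section Kernel.
Variables (R : realType) (X : choiceType).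

Definition delta (y : X) : X -> R[i] := fun z => (z == y)%:R.

Lemma supp_delta y : [set z | delta y z != 0] = [set y].
Proof.
apply/seteqP; split => z /=; rewrite /delta.
  by case: (eqVneq z y) => // _; rewrite eqxx.
by move->; rewrite eqxx oner_eq0.
Qed.

Lemma fin_supp_delta y : fin_supp (delta y).
Proof. by rewrite /fin_supp supp_delta; exact: finite_set1. Qed.

Lemma kop_delta (k : X -> X -> R[i]) x y : kop k (delta y) x = k x y.
Proof. by rewrite /kop supp_delta fsbig_set1 /delta eqxx mulr1. Qed.

End Kernel.

Lemma shift_inv_opE (R : realType) (n N : nat) (r : Zn n -> 'M[R[i]]_N)
    (v : Zn n -> 'I_N -> R[i]) a i :
  shift_inv_op r v a i
  = \sum_(c \in [set c | exists j, v c j != 0]) \sum_(j < N) r (a - c) i j * v c j.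
Proof.
have subK c : a - (a - c) = c by rewrite opprB addrC subrK.
rewrite /shift_inv_op /Vshift.
have -> : [set c | exists j, v c j != 0]
          = (fun b => a - b) @` [set b | exists j, v (a - b) j != 0].
  apply/seteqP; split => [c [j vc]|c [b [j vb] <-]]; last by exists j.
  by exists (a - c); rewrite ?subK //; exists j; rewrite subK.
rewrite fsbig_image; last by move=> b b' _ _ /addrI /oppr_inj.
by apply: eq_fsbigr => b _; rewrite subK.
Qed.

Section PeriodicSpace.
Variables (R : realType) (n N : nat) (X : countType).
Variables (act : Zn n -> X -> X) (xs : 'I_N -> X).
Hypothesis act0 : forall x, act 0 x = x.
Hypothesis actD : forall a b x, act (a + b) x = act a (act b x).

Lemma actK a : cancel (act (- a)) (act a).
Proof. by move=> x; rewrite -actD subrr act0. Qed.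

Lemma actNK a : cancel (act a) (act (- a)).
Proof. by move=> x; rewrite -actD addNr act0. Qed.

Lemma Tshift_delta a y : Tshift act a (delta R y) = delta R (act a y).
Proof. by apply/funext => x; rewrite /Tshift /delta (can2_eq (actK a) (actNK a)). Qed.

Section Commuting.
Variable k : X -> X -> R[i].
Hypothesis k_periodic : forall a (u : X -> R[i]), fin_supp u ->
  Tshift act a (kop k u) = kop k (Tshift act a u).

Lemma kernel_shiftE a x y : k (act (- a) x) y = k x (act a y).
Proof.
have := congr1 (fun f => f x) (k_periodic a (fin_supp_delta R y)).
by rewrite /= Tshift_delta /Tshift !kop_delta.
Qed.

Lemma rker_translate a b i j : rker act xs k a b i j = rker act xs k (a - b) 0 i j.
Proof. by rewrite /rker act0 -kernel_shiftE -actD addrC. Qed.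

End Commuting.

Lemma rker_le_bound (k : X -> X -> R[i]) (h : Zn n -> R) :
  (forall a b j, \sum_(i < N) `|rker act xs k a b i j| <= ((h (a - b))%:C)%C) ->
  forall b i j, `|rker act xs k b 0 i j| <= ((`|h b|)%:C)%C.
Proof.
move=> hk b i j; have := hk b 0 j; rewrite subr0 => sum_le.
apply: le_trans (le_trans sum_le _); last by rewrite lecR ler_norm.
by rewrite (bigD1 i) //= lerDl sumr_ge0.
Qed.

Hypothesis act_free : forall a x, act a x = x -> a = 0.
Hypothesis xs_distinct : forall i j a, act a (xs i) = xs j -> i = j.

Lemma act_injl x : injective (act ^~ x).
Proof.
move=> a c /= E; have : act (- c + a) x = x by rewrite actD E actNK.
by move/act_free/eqP; rewrite addrC subr_eq0 => /eqP.
Qed.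

Lemma act_xs_inj : injective (fun p : Zn n * 'I_N => act p.1 (xs p.2)).
Proof.
move=> [c l] [c' l'] /= E.
have El : l = l' by apply: (xs_distinct (a := - c' + c)); rewrite actD E actNK.
by subst l'; rewrite (act_injl E).
Qed.

Lemma Uinv_act (v : Zn n -> 'I_N -> R[i]) a j : Uinv act xs v (act a (xs j)) = v a j.
Proof.
rewrite /Uinv (bigD1 j) //= big1 ?addr0 => [|l Nl]; case: pselect => [H|H] //.
- by case: (cid H) => a' Ha' /=; rewrite (act_injl Ha').
- by case: H; exists a.
- case: H => a' E; have [_ El] := act_xs_inj (x1 := (a', l)) (x2 := (a, j)) E.
  by rewrite El eqxx in Nl.
Qed.

Hypothesis xs_cover : forall x, exists i a, x = act a (xs i).

Lemma Uop_kop_Uinv (k : X -> X -> R[i]) (v : Zn n -> 'I_N -> R[i]) a i :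
  fin_supp_vec v ->
  Uop act xs (kop k (Uinv act xs v)) a i
  = \sum_(c \in [set c | exists j, v c j != 0]) \sum_(j < N) rker act xs k a c i j * v c j.
Proof.
move=> fin_v; set D := [set c | exists j, v c j != 0].
pose orbit_pt (p : Zn n * 'I_N) := act p.1 (xs p.2).
rewrite /Uop /kop (fsbig_widen _ (orbit_pt @` (D `*` setT))); last 2 first.
- move=> y /=; have [j [c ->]] := xs_cover y; rewrite Uinv_act => vc.
  by exists (c, j) => //; split => //; exists j.
- move=> _ [[[c j] _ <-] /negP]; rewrite /preimage /= negbK => /eqP ->.
  by rewrite mulr0.
rewrite fsbig_image; last by move=> p q _ _ /act_xs_inj.
rewrite -(@pair_fsbig _ _ _ _ _ D setT
  (fun c j => k (act a (xs i)) (orbit_pt (c, j)) * Uinv act xs v (orbit_pt (c, j))));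
  [|done|exact: finite_finset].
apply: eq_fsbigr => c _; rewrite fsbig_setT_fin; apply: eq_bigr => j _.
by rewrite /orbit_pt Uinv_act.
Qed.

End PeriodicSpace.

Lemma summable_normr (R : realType) (T : choiceType) (D : set T) (f : T -> R) :
  summable D (fun x => (f x)%:E) -> summable D (fun x => (`|f x|)%:E).
Proof.
by rewrite /summable => sf; under eq_esum do rewrite abse_EFin normr_id -abse_EFin.
Qed.

Theorem proposition4p2 (R : realType) (n N : nat) (X : countType)
    (rho : X -> X -> R) (act : Zn n -> X -> X) (xs : 'I_N -> X)
    (k : X -> X -> R[i]) :
  periodic_dms rho act xs ->
  in_WX act xs k ->
  (forall (a : Zn n) (u : X -> R[i]), fin_supp u ->
     Tshift act a (kop k u) = kop k (Tshift act a u)) ->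
  exists h : Zn n -> R,
    [/\ (forall b, 0 <= h b),
        summable setT (fun b => (h b)%:E),
        (forall b i j, `|rker act xs k b 0 i j| <= ((h b)%:C)%C) &
        forall v : Zn n -> 'I_N -> R[i], fin_supp_vec v ->
          Uop act xs (kop k (Uinv act xs v))
          = shift_inv_op (fun b => \matrix_(i, j) rker act xs k b 0 i j) v].
Proof.
move=> [_ [act0 actD] _ act_free [xs_cover xs_distinct]] [h [h_sum h_bound]] k_per.
exists (fun b => `|h b|); split => //.
- exact: summable_normr.
- exact: rker_le_bound.
move=> v fin_v; apply/funext => a; apply/funext => i.
rewrite Uop_kop_Uinv // shift_inv_opE; apply: eq_fsbigr => c _.
by apply: eq_bigr => j _; rewrite mxE (rker_translate xs act0 actD k_per).
Qed.
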